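(* Let $\mathcal{A}$ be a separating union-closed family with base set $[n]$ and height $h=4$, and suppose $|\mathcal{B}(\mathcal{A})|=3$. Let $B=b(\mathcal{A}_{<n/2})$. Then $|B| \in \{n-1, n\}$.
   Context: A family of sets $\mathcal{A}$ is union-closed if it is a finite family of distinct finite sets with at least one nonempty member set, and $X,Y\in\mathcal{A}$ implies $X\cup Y\in\mathcal{A}$ (the empty set may be a member). For a family $\mathcal{F}$, $b(\mathcal{F})=\bigcup_{F\in\mathcal{F}}F$; the base set $b(\mathcal{A})$ is denoted $[n]=\{1,\dots,n\}$. $\mathcal{A}$ is separating if for any two distinct $x,y\in[n]$ there is $A\in\mathcal{A}$ containing exactly one of $x,y$. A chain in $\mathcal{A}$ is a subfamily any two distinct members of which are comparable under proper inclusion; the height $h$ of $\mathcal{A}$ is the maximum size of a chain in $\mathcal{A}$. For real $x\ge 0$, $\mathcal{A}_{<x}=\{A\in\mathcal{A} : |A|<x\}$. For $\mathcal{S}\subseteq\mathcal{A}$ and $S\in\mathcal{S}$, $\mathrm{irr}_{\mathcal{S}}(S)=\{s\in S : s\notin b(\mathcal{S}\setminus\{S\})\}$, and $\mathcal{S}$ is irredundant if $\mathrm{irr}_{\mathcal{S}}(S)\neq\emptyset$ for every $S\in\mathcal{S}$. With $B=b(\mathcal{A}_{<n/2})$, $\mathcal{B}(\mathcal{A})$ denotes any irredundant subfamily of $\mathcal{A}_{<n/2}$ of minimum size such that $b(\mathcal{B}(\mathcal{A}))=B$. *)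

From mathcomp Require Import all_boot.
Set Implicit Arguments. Unset Strict Implicit. Unset Printing Implicit Defensive.

Section UC.
Variable n : nat.
Notation fam := {set {set 'I_n}}.

Definition bset (F : fam) : {set 'I_n} := \bigcup_(X in F) X.

(* union-closed family (finite, distinct sets automatically), with a
   nonempty member *)
Definition union_closed (A : fam) : Prop :=
  (exists2 X, X \in A & X != set0) /\
  (forall X Y, X \in A -> Y \in A -> X :|: Y \in A).

Definition separating (A : fam) : Prop :=
  forall x y : 'I_n, x != y ->
    exists2 X, X \in A & (x \in X) != (y \in X).

Definition is_chain (C : fam) : bool :=
  [forall X in C, forall Y in C, (X != Y) ==> ((X \proper Y) || (Y \proper X))].

Definition height (A : fam) : nat :=
  \max_(C in powerset A | is_chain C) #|C|.

(* A_{<n/2} : members with |X| < n/2, i.e. 2|X| < n *)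
Definition small_part (A : fam) : fam := [set X in A | (#|X|).*2 < n].

Definition irr (S : fam) (X : {set 'I_n}) : {set 'I_n} :=
  X :\: bset (S :\ X).

Definition irredundant (S : fam) : bool := [forall X in S, irr S X != set0].

Definition B_candidate (A : fam) (S : fam) : bool :=
  [&& S \subset small_part A, irredundant S & bset S == bset (small_part A)].

Definition is_BA (A : fam) (S : fam) : Prop :=
  B_candidate A S /\ forall S', B_candidate A S' -> #|S| <= #|S'|.
End UC.

From mathcomp Require Import all_boot.
From mathcomp Require Import zify.

Set Implicit Arguments.
Unset Strict Implicit.
Unset Printing Implicit Defensive.

(* If |B| <= n - 2, two points x, y outside B are separated by some X in A.
   Irredundancy of B(A) = {S1, S2, S3} makes S1, S1 u S2, S1 u S2 u S3 = B
   strictly increasing, and B c X u B c [n] extends this to a chain of five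
   members of A, against h = 4. *)

Lemma last_scanl (T : Type) (f : T -> T -> T) (x : T) (s : seq T) :
  last x (scanl f x s) = foldl f x s.
Proof. by elim: s x => //= y s IHs x; rewrite IHs. Qed.

Section IrredundantChains.
Variable n : nat.
Implicit Types (A S : {set {set 'I_n}}) (T X Z : {set 'I_n}).

Local Notation properR := [rel X Y : {set 'I_n} | X \proper Y].

Lemma bsetS S S' : S \subset S' -> bset S \subset bset S'.
Proof.
move=> sSS'; apply/bigcupsP => Z ZS.
exact: bigcup_sup (subsetP sSS' Z ZS).
Qed.

Lemma bset_mem A : union_closed A -> bset A \in A.
Proof.
move=> [[X XA /negbTE X0] UC].
have: (bset A == set0) || (bset A \in A).
  apply: (big_ind (fun Z => (Z == set0) || (Z \in A))) => [|Z W|Z ZA].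
  - by rewrite eqxx.
  - case/orP=> [/eqP-> | ZA]; first by rewrite set0U.
    case/orP=> [/eqP-> | WA]; first by rewrite setU0 ZA orbT.
    by rewrite (UC _ _ ZA WA) orbT.
  - by rewrite ZA orbT.
case/orP=> // /eqP A0; move: X0; rewrite -subset0 -A0.
by rewrite (bigcup_sup X XA).
Qed.

Lemma union_closed_scanl A T s :
  union_closed A -> (T == set0) || (T \in A) -> {subset s <= A} ->
  {subset scanl (@setU _) T s <= A}.
Proof.
move=> [_ UC]; elim: s T => //= X s IHs T T0A sA Y.
have XA : X \in A by apply: sA; rewrite mem_head.
have TXA : T :|: X \in A.
  by case/orP: T0A => [/eqP->|TA]; rewrite ?set0U ?UC.
rewrite inE => /orP[/eqP-> // | Ys].
by apply: IHs Ys; rewrite ?TXA ?orbT // => Z Zs; apply: sA; rewrite inE Zs orbT.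
Qed.

Lemma irredundant_proper S Z T :
  irredundant S -> Z \in S -> T \subset bset (S :\ Z) -> T \proper T :|: Z.
Proof.
move=> irrS ZS sTS; apply: properUl; apply/negP => sZT.
have /set0Pn[z] := forall_inP irrS Z ZS.
rewrite /irr inE => /andP[/negP zS zZ].
by apply/zS/(subsetP sTS)/(subsetP sZT).
Qed.

(* T is covered by members of S not listed in s, so each listed member adds
   one of its irredundant points. *)
Lemma irredundant_path_scanl S T s :
  irredundant S -> uniq s -> {subset s <= S} ->
  T \subset bset (S :\: [set:: s]) -> path properR T (scanl (@setU _) T s).
Proof.
move=> irrS; elim: s T => //= Z s IHs T /andP[Zs uniq_s] sS sTS.
have ZS : Z \in S by apply: sS; rewrite mem_head.
apply/andP; split.
  apply: irredundant_proper irrS ZS (subset_trans sTS _); apply: bsetS.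
  by apply/subsetP => Y; rewrite !inE negb_or => /andP[/andP[-> _] ->].
apply: IHs => // [Y Ys|]; first by apply: sS; rewrite inE Ys orbT.
rewrite subUset; apply/andP; split.
  apply: subset_trans sTS _; apply: bsetS.
  by apply/subsetP => Y; rewrite !inE negb_or => /andP[/andP[_ ->] ->].
by apply: bigcup_sup; rewrite !inE ZS Zs.
Qed.

Lemma height_sorted A s :
  {subset s <= A} -> sorted properR s -> size s <= height A.
Proof.
move=> sA sorted_s.
have proper_tr : transitive properR.
  by move=> Y X Z; apply: proper_trans.
have uniq_s : uniq s.
  by apply: sorted_uniq proper_tr _ _ sorted_s => X; apply: properxx.
have chain_s : is_chain [set:: s].
  apply/forall_inP => X; rewrite inE => Xs.
  apply/forall_inP => Y; rewrite inE => Ys.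
  apply/implyP => neqXY; have lt_proper := sorted_ltn_index proper_tr sorted_s.
  case: (ltngtP (index X s) (index Y s)) => [ltXY|ltYX|eqXY].
  - by rewrite [X \proper Y](lt_proper X Y).
  - by rewrite [Y \proper X](lt_proper Y X) ?orbT.
  - by rewrite -(nth_index set0 Xs) eqXY nth_index ?eqxx in neqXY.
have sA' : [set:: s] \in powerset A.
  by rewrite powersetE; apply/subsetP => X; rewrite inE; apply: sA.
rewrite -(card_uniqP uniq_s) -cardsE.
apply: (@leq_bigmax_cond _ (fun C => (C \in powerset A) && is_chain C)).
by rewrite sA'.
Qed.

Lemma separating_proper A T x y :
  separating A -> x != y -> x \notin T -> y \notin T ->
  exists2 X, X \in A & (T \proper X :|: T) && (X :|: T \proper setT).
Proof.
move=> sepA xy xT yT; have [X XA xyX] := sepA x y xy; exists X => //.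
have [u [v [uX vX uT vT]]] :
    exists u v, [/\ u \in X, v \notin X, u \notin T & v \notin T].
  case: (boolP (x \in X)) xyX => xX /= yX; first by exists x, y.
  by exists y, x; rewrite -[y \in X]negbK.
rewrite properUr /=; last by apply/subsetPn; exists u.
by rewrite properE subsetT; apply/subsetPn; exists v; rewrite // !inE negb_or vX.
Qed.

Lemma irredundant_height A S :
  union_closed A -> bset A = setT -> separating A ->
  S \subset A -> irredundant S -> 1 < #|~: bset S| -> #|S| + 2 <= height A.
Proof.
move=> UCA bA sepA SA irrS /card_gt1P[x [y [xS yS xy]]].
rewrite !inE in xS yS.
have [X XA /andP[ltSX ltXT]] := separating_proper sepA xy xS yS.
pose s := scanl (@setU _) set0 (rcons (enum S) X).
have foldS : foldl (@setU _) set0 (enum S) = bset S.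
  by rewrite foldlE big_cons /= set0U big_enum.
have path_s : path properR set0 s.
  rewrite /s scanl_rcons rcons_path last_scanl foldl_rcons foldS /=.
  rewrite setUC ltSX andbT.
  apply: (irredundant_path_scanl irrS (enum_uniq S)); last exact: sub0set.
  by move=> Z; rewrite mem_enum.
have last_s : last set0 s = X :|: bset S.
  by rewrite last_scanl foldl_rcons foldS setUC.
have <- : size (rcons s setT) = #|S| + 2.
  by rewrite size_rcons size_scanl size_rcons -cardE addn2.
apply: height_sorted.
  move=> Z; rewrite mem_rcons inE => /orP[/eqP-> | Zs].
    by rewrite -bA bset_mem.
  apply: union_closed_scanl Zs => //; first by rewrite eqxx.
  move=> Y; rewrite mem_rcons inE => /orP[/eqP-> // | ].
  by rewrite mem_enum => /(subsetP SA).
by apply: (path_sorted (x := set0)); rewrite rcons_path path_s last_s.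
Qed.

End IrredundantChains.

Theorem propositionF (n : nat) (A : {set {set 'I_n}}) :
  union_closed A -> bset A = setT -> separating A -> height A = 4 ->
  (exists2 S, is_BA A S & #|S| = 3) ->
  #|bset (small_part A)| = n.-1 \/ #|bset (small_part A)| = n.
Proof.
move=> UCA bA sepA hA [S [/and3P[S_small irrS /eqP bS] _] cS].
have SA : S \subset A.
  by apply: subset_trans S_small _; apply/subsetP => X; rewrite inE => /andP[].
have : #|~: bset S| <= 1.
  rewrite leqNgt; apply/negP => /(irredundant_height UCA bA sepA SA irrS).
  by rewrite cS hA.
have := cardsC (bset S); rewrite card_ord -bS; lia.
Qed.
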